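(* Let $G$ be a split graph with vertex partition $\{X,Y\}$, where $X=\{v_1,\ldots,v_n\}$ is a maximal clique of $G$ and $Y=V(G)\setminus X$ is a stable set, and write $d_i=|N_G(v_i)\cap Y|$, with $d_1\ge\cdots\ge d_n$ and $n\ge 2$. Then $\chi'_{\rm irr}(G)=1$ (i.e., $G$ itself is locally irregular) if and only if $d_1>d_2>\cdots>d_n$.
   Context: All graphs are finite and simple. A graph is locally irregular if any two adjacent vertices have distinct degrees. For a graph admitting a decomposition into locally irregular subgraphs (edge sets partitioning $E(G)$), $\chi'_{\rm irr}(G)$ is the minimum number of subgraphs in such a decomposition. *)

From mathcomp Require Import all_boot.
Set Implicit Arguments. Unset Strict Implicit. Unset Printing Implicit Defensive.

Definition simple_graph (T : finType) (e : rel T) : Prop :=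
  symmetric e /\ irreflexive e.

Definition deg (T : finType) (f : rel T) (x : T) : nat := #|[set y | f x y]|.

Definition locally_irregular (T : finType) (f : rel T) : Prop :=
  forall x y, f x y -> deg f x != deg f y.

Definition colour_class (T : finType) (e : rel T) (c : T -> T -> nat) (i : nat)
  : rel T := fun x y => e x y && (c x y == i).

(* A decomposition of E(G) into k locally irregular subgraphs, given as an
   edge colouring c with colours 0..k-1 (c is symmetric on edges); the edge
   sets of the k colour classes partition E(G). *)
Definition irr_decomposition (T : finType) (e : rel T) (k : nat)
  (c : T -> T -> nat) : Prop :=
  (forall x y, e x y -> c x y < k /\ c x y = c y x) /\
  (forall i, i < k -> locally_irregular (colour_class e c i)).

Definition irr_decomposable (T : finType) (e : rel T) (k : nat) : Prop :=
  exists c, irr_decomposition e k c.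

Definition chi_irr_is (T : finType) (e : rel T) (k : nat) : Prop :=
  irr_decomposable e k /\ (forall j, j < k -> ~ irr_decomposable e j).

Definition is_clique (T : finType) (e : rel T) (A : {set T}) : Prop :=
  forall x y, x \in A -> y \in A -> x != y -> e x y.
Definition is_stable (T : finType) (e : rel T) (A : {set T}) : Prop :=
  forall x y, x \in A -> y \in A -> ~~ e x y.
Definition is_maximal_clique (T : finType) (e : rel T) (A : {set T}) : Prop :=
  is_clique e A /\
  (forall B : {set T}, A \proper B -> ~ is_clique e B).

From mathcomp Require Import all_boot.
From mathcomp Require Import zify.

Set Implicit Arguments.
Unset Strict Implicit.
Unset Printing Implicit Defensive.

(* Since G has an edge, chi'_irr(G) = 1 says that G is locally irregular. In a split
   graph with maximal clique X, a vertex y outside X has all its neighbours in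
   X but is not adjacent to all of X (maximality), so deg y < |X|, whereas a
   clique vertex adjacent to y has degree |X| - 1 + d >= |X|. Hence only edges
   inside X can violate local irregularity, and there deg v_i = |X| - 1 + d_i:
   G is locally irregular iff the d_i are pairwise distinct, which for a
   nonincreasing sequence means strictly decreasing. *)

Lemma eq_deg (T : finType) (f g : rel T) : f =2 g -> deg f =1 deg g.
Proof. by move=> fg x; apply: eq_card => y; rewrite !inE fg. Qed.

Section OneColour.

Variables (T : finType) (e : rel T).

Lemma irr_decomposable0 (a b : T) : e a b -> ~ irr_decomposable e 0.
Proof. by move=> eab [c [colour_lt _]]; have [] := colour_lt _ _ eab. Qed.

Lemma irr_decomposable1 : irr_decomposable e 1 <-> locally_irregular e.
Proof.
have colour0E c : (forall x y, e x y -> c x y < 1) -> colour_class e c 0 =2 e.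
  move=> c_lt1 x y; rewrite /colour_class.
  by case exy: (e x y) => //=; move: (c_lt1 _ _ exy); case: (c x y).
split.
- move=> [c [colour_lt irr_c]] x y exy.
  have c_lt1 x' y' (exy' : e x' y') : c x' y' < 1 by case: (colour_lt _ _ exy').
  rewrite -!(eq_deg (colour0E c c_lt1)); apply: irr_c => //.
  by rewrite colour0E.
- move=> irr_e; exists (fun _ _ => 0); split=> // [[|//]] _ x y.
  have c0E := colour0E (fun _ _ => 0) (fun _ _ _ => isT).
  by rewrite !(eq_deg c0E) c0E; apply: irr_e.
Qed.

Lemma chi_irr_is1 (a b : T) : e a b -> (chi_irr_is e 1 <-> locally_irregular e).
Proof.
move=> eab; rewrite /chi_irr_is irr_decomposable1; split=> [[] //|irr_e].
by split=> // [[|//]] _; apply: irr_decomposable0 eab.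
Qed.

End OneColour.

Definition deg_outside (T : finType) (e : rel T) (X : {set T}) (x : T) : nat :=
  #|[set y in ~: X | e x y]|.

Section SplitGraph.

Variables (T : finType) (e : rel T) (X : {set T}).
Hypotheses (e_sym : symmetric e) (e_irr : irreflexive e).
Hypotheses (X_clique : is_maximal_clique e X) (Y_stable : is_stable e (~: X)).

Lemma deg_clique x :
  x \in X -> deg e x = (#|X|).-1 + deg_outside e X x.
Proof.
move=> xX; rewrite /deg -(cardsID X [set y | e x y]).
have -> : [set y | e x y] :&: X = X :\ x.
  apply/setP => y; rewrite !inE; have [->|y_x] /= := eqVneq y x.
    by rewrite e_irr.
  case yX: (y \in X); last by rewrite andbF.
  by rewrite X_clique.1 // eq_sym.
have -> : [set y | e x y] :\: X = [set y in ~: X | e x y].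
  by apply/setP => y; rewrite !inE andbC.
by rewrite (cardsD1 x X) xX.
Qed.

Lemma stable_nonadj x y : x \notin X -> y \notin X -> ~~ e x y.
Proof. by move=> xY yY; apply: Y_stable; rewrite inE. Qed.

Lemma nbhs_stable_sub y : y \notin X -> [set x | e y x] \subset X.
Proof.
move=> yY; apply/subsetP => x; rewrite inE => eyx; apply/negPn/negP => xY.
by rewrite (negbTE (stable_nonadj yY xY)) in eyx.
Qed.

Lemma deg_stable_lt y : y \notin X -> deg e y < #|X|.
Proof.
move=> yY; apply: proper_card; rewrite properEneq nbhs_stable_sub // andbT.
apply/negP => /eqP nbhs_yE; apply: (X_clique.2 (y |: X)).
  by apply: properUr; rewrite sub1set.
have eyX x : x \in X -> e y x by rewrite -nbhs_yE inE.
move=> a b; rewrite !inE => /orP[/eqP->|aX] /orP[/eqP->|bX] ab.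
- by rewrite eqxx in ab.
- exact: eyX.
- by rewrite e_sym eyX.
- exact: X_clique.1.
Qed.

Lemma deg_stable_lt_clique x y :
  x \in X -> y \notin X -> e x y -> deg e y < deg e x.
Proof.
move=> xX yY exy; rewrite (deg_clique xX).
have : 0 < deg_outside e X x by apply/card_gt0P; exists y; rewrite !inE yY.
by have := deg_stable_lt yY; lia.
Qed.

Lemma split_locally_irregularP :
  locally_irregular e <-> {in X &, injective (deg_outside e X)}.
Proof.
split=> [irr_e x x' xX x'X dxx'|d_inj x y exy].
  apply/eqP/negPn/negP => x_x'.
  by move: (irr_e _ _ (X_clique.1 _ _ xX x'X x_x')); rewrite !deg_clique // dxx' eqxx.
have [xX|xY] := boolP (x \in X); have [yX|yY] := boolP (y \in X).
- rewrite !deg_clique // eqn_add2l; apply/eqP => /d_inj x_y.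
  by move: exy; rewrite x_y // e_irr.
- by rewrite (gtn_eqF (deg_stable_lt_clique xX yY exy)).
- have eyx : e y x by rewrite e_sym.
  by rewrite (ltn_eqF (deg_stable_lt_clique yX xY eyx)).
- by move: (stable_nonadj xY yY); rewrite exy.
Qed.

End SplitGraph.

Lemma injective_nonincreasingE n (f : 'I_n -> nat) :
  (forall i j : 'I_n, i <= j -> f j <= f i) ->
  injective f <-> (forall i j : 'I_n, i < j -> f j < f i).
Proof.
move=> f_noninc; split=> [f_inj i j ij|f_decr i j fij].
  by rewrite ltn_neqAle (inj_eq f_inj) -val_eqE (gtn_eqF ij) f_noninc // ltnW.
apply/val_inj; case: (ltngtP i j) => // ij;
  by have := f_decr _ _ ij; rewrite fij ltnn.
Qed.

Lemma injective_in_imset (aT rT : finType) (R : eqType) (v : aT -> rT)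
    (f : rT -> R) :
  injective v -> {in [set v i | i : aT] &, injective f} <-> injective (f \o v).
Proof.
move=> v_inj; split=> [f_inj i j fvij|fv_inj].
  by apply: v_inj; apply: f_inj fvij; rewrite imset_f.
by move=> _ _ /imsetP[i _ ->] /imsetP[j _ ->] /fv_inj ->.
Qed.

Theorem fact1p2 (T : finType) (e : rel T) (n : nat) (X : {set T})
  (v : 'I_n -> T) :
  simple_graph e ->
  is_maximal_clique e X ->
  is_stable e (~: X) ->
  injective v ->
  X = [set v i | i : 'I_n] ->
  2 <= n ->
  (forall i j : 'I_n, i <= j ->
     #|[set y in ~: X | e (v j) y]| <= #|[set y in ~: X | e (v i) y]|) ->
  (chi_irr_is e 1 <->
   (forall i j : 'I_n, i < j ->
     #|[set y in ~: X | e (v j) y]| < #|[set y in ~: X | e (v i) y]|)).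
Proof.
move=> [e_sym e_irr] X_clique Y_stable v_inj Xdef n_ge2 d_noninc.
have vX i : v i \in X by rewrite Xdef imset_f.
have e01 : e (v (Ordinal (ltnW n_ge2))) (v (Ordinal n_ge2)).
  by apply: X_clique.1; rewrite ?vX // (inj_eq v_inj) -val_eqE.
rewrite (chi_irr_is1 e01) (split_locally_irregularP e_sym e_irr X_clique Y_stable).
rewrite {1}Xdef injective_in_imset //.
exact: injective_nonincreasingE.
Qed.
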